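(* There is a unique function $h$ such that $h\neq\underline{\mathfrak{0}}$ and $h(x)=\underline{\mathfrak{0}}$ for every $x\neq h$. (This function is denoted $\varphi_0$; one has $\varphi_0=\underline{\mathfrak{0}}\circ\underline{\mathfrak{0}}$.)
   Context: Flow is a first-order theory with equality whose only non-logical symbol is a binary function symbol written $f(x)$; all objects are called functions. Axioms: (F1) $\forall f\forall g\big(((f(g)=f\wedge g(f)=g)\vee(f(g)=g\wedge g(f)=f))\Rightarrow f=g\big)$; (F2) $\forall f\,(f(f)=f)$; (F3) there is a (necessarily unique) $\underline{\mathfrak{1}}$ with $\underline{\mathfrak{1}}(x)=x$ for all $x$; (F4) there is a (necessarily unique) $\underline{\mathfrak{0}}$ with $\underline{\mathfrak{0}}(x)=\underline{\mathfrak{0}}$ for all $x$. Definition ($\mathfrak{F}$-composition): given $f,g$, a function $h$ is the composition $f\circ g$ iff (i) $h\neq\underline{\mathfrak{0}}$; (ii) for all $x$ with $x\neq f$, $x\neq g$, $x\neq h$: $h(x)=f(g(x))$; (iii) if $h\neq f$ then $h(f)=\underline{\mathfrak{0}}$; (iv) if $h\neq g$ then $h(g)=\underline{\mathfrak{0}}$; (v) if $g\neq h$, $f\neq h$, $g\neq\underline{\mathfrak{1}}$ and $f\neq\underline{\mathfrak{1}}$, then $f(g(h))=\underline{\mathfrak{0}}$ or $g(h)=\underline{\mathfrak{0}}$. Axiom (F5, $\mathfrak{F}$-Composition): for all $f,g$ there is exactly one $h$ with $h=f\circ g$. *)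

(* plain Rocq. Flow models: a carrier T with a binary
   operation app, where [app f x] stands for f(x). *)

Section FlowDefs.
Variable T : Type.
Variable app : T -> T -> T.

Definition flow_F1 : Prop :=
  forall f g : T,
    ((app f g = f /\ app g f = g) \/ (app f g = g /\ app g f = f)) -> f = g.

Definition flow_F2 : Prop := forall f : T, app f f = f.

Definition is_one (one : T) : Prop := forall x : T, app one x = x.

Definition is_zero (zero : T) : Prop := forall x : T, app zero x = zero.

Definition is_comp (one zero f g h : T) : Prop :=
  h <> zero /\
  (forall x : T, x <> f -> x <> g -> x <> h -> app h x = app f (app g x)) /\
  (h <> f -> app h f = zero) /\
  (h <> g -> app h g = zero) /\
  (g <> h -> f <> h -> g <> one -> f <> one ->
     app f (app g h) = zero \/ app g h = zero).

Definition flow_F5 (one zero : T) : Prop :=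
  forall f g : T, exists! h : T, is_comp one zero f g h.

End FlowDefs.

From Stdlib Require Import Classical.

(* Call h a "zero-annihilator" if h <> 0 and h(x) = 0 for every x <> h.
   The proof rests on two observations about F-composition with the
   constant function 0:
   - every zero-annihilator h satisfies the five clauses defining 0 o 0
     (only (F4) is needed, since 0(y) = 0 for all y);
   - conversely, the composition 0 o 0 is a zero-annihilator: for x <> 0
     clause (ii) gives (0 o 0)(x) = 0(0(x)) = 0, and for x = 0 clause (iii)
     gives (0 o 0)(0) = 0.
   Axiom (F5) provides a unique 0 o 0, so by the two facts it is the unique
   zero-annihilator; the second conjunct of the theorem is the first fact. *)

Section ZeroAnnihilator.
Variable T : Type.
Variable app : T -> T -> T.
Variables one zero : T.
Hypothesis zero_const : is_zero T app zero.

Definition zero_annihilator (h : T) : Prop :=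
  h <> zero /\ forall x : T, x <> h -> app h x = zero.

Lemma zero_annihilator_is_comp (h : T) :
  zero_annihilator h -> is_comp T app one zero zero zero h.
Proof.
  intros [h_nz h_ann].
  assert (zero_ne_h : zero <> h) by (intro E; apply h_nz; symmetry; exact E).
  repeat split.
  - exact h_nz.
  - intros x _ _ x_ne_h. rewrite h_ann, !zero_const by exact x_ne_h.
    reflexivity.
  - intros _. exact (h_ann zero zero_ne_h).
  - intros _. exact (h_ann zero zero_ne_h).
  - intros _ _ _ _. left. apply zero_const.
Qed.

Lemma comp_zero_zero_annihilator (h : T) :
  is_comp T app one zero zero zero h -> zero_annihilator h.
Proof.
  intros [h_nz [h_apply [h_at_zero _]]].
  split; [exact h_nz |].
  intros x x_ne_h.
  destruct (classic (x = zero)) as [-> | x_nz].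
  - exact (h_at_zero h_nz).
  - rewrite h_apply, !zero_const by assumption. reflexivity.
Qed.

End ZeroAnnihilator.

Theorem theorem6 (T : Type) (app : T -> T -> T) (one zero : T)
  (F1 : flow_F1 T app) (F2 : flow_F2 T app)
  (F3 : is_one T app one) (F4 : is_zero T app zero)
  (F5 : flow_F5 T app one zero) :
  (exists! h : T, h <> zero /\ forall x : T, x <> h -> app h x = zero) /\
  (forall h : T, (h <> zero /\ forall x : T, x <> h -> app h x = zero) ->
     is_comp T app one zero zero zero h).
Proof.
  split; [| exact (zero_annihilator_is_comp T app one zero F4)].
  destruct (F5 zero zero) as [phi0 [phi0_comp phi0_unique]].
  exists phi0. split.
  - exact (comp_zero_zero_annihilator T app one zero F4 phi0 phi0_comp).
  - intros h h_ann. apply phi0_unique.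
    exact (zero_annihilator_is_comp T app one zero F4 h h_ann).
Qed.
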